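(* Let $F\in Sh^{s,0}_{\Lambda_L}(X)\cap Mod(X)$, given by data $(V,\rho,W_s,\rho_s,T_s)$, and let $f$ be any local trivialization. Let $c_s$ be a pure framed cord starting and ending on (the framing curve of) $K_s$, regarded (after homotopy) as a loop in $X\setminus L$. Then $\epsilon_F(\lambda_s)=\mathrm{tr}(\rho(\ell_s))-\mathrm{tr}(\rho_s(K_s))$, $\epsilon_F(\mu_s)=1-\mathrm{tr}(\mathrm{id}_V-\rho(m_s))$, $\epsilon_F(c_s)=\mathrm{tr}(\rho(c_s)-\rho(m_s\cdot c_s))$, where $\epsilon_F=\epsilon_{(F,f)}$. In particular these values do not depend on the choice of the local trivialization.
   Context: $X=\mathbb{R}^3$ or $S^3$, $k$ a field, $(L,L')$ an $r$-component framed oriented link, $L=K_1\sqcup\dots\sqcup K_r$. Sheaves in $Sh^{s,0}_{\Lambda_L}(X)\cap Mod(X)$ (sheaves of $k$-vector spaces with micro-support at infinity in the unit conormal of $L$, microlocally simple with Morse cone in degree $0$) are equivalent to data $(V,\rho,W_s,\rho_s,T_s)$: $\rho:\pi_1(X\setminus L)\to GL(V)$ the local system on the complement ($V$ finite-dimensional), $\rho_s:\pi_1(K_s)\to GL(W_s)$ the local system on $K_s$, $T_s:W_s\to V$ the injective restriction map with one-dimensional cokernel, the meridian $m_s$ acting trivially on its image and $\rho(\ell_s)T_s=T_s\rho_s(K_s)$ for the longitude $\ell_s$; we view $W_s\subset V$. $A_c$ denotes trivialized parallel transport along a path $c$, $M_t=\rho(m_t)$. A local trivialization is an $r$-tuple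 of surjective linear maps $f_s:V\to k$ with $f_s|_{W_s}=0$. $\epsilon_{(F,f)}$ is the augmentation of the framed cord algebra $\mathrm{Cord}(L)$ given on generators by $\epsilon(c_{st})=f_sA_{c_{st}}(\mathrm{id}_V-M_t)f_t^{-1}$ for framed cords $c_{st}$ from the framing curve of $K_s$ to that of $K_t$, $\epsilon(\lambda_s)=f_sA_{\ell_s}f_s^{-1}$, $\epsilon(\mu_s)=1-f_s(\mathrm{id}_V-M_s)f_s^{-1}$, with $f_s^{-1}$ any right inverse of $f_s$. *)

(* Linear-algebra model of the data (V, rho, W_s, rho_s, T_s)
   attached to one component K_s.
   Conventions: V = k^(d+1) as column vectors 'cV_(d.+1); linear maps V -> V
   are matrices acting by  v |-> A *m v; W_s = k^d embedded by T : 'M_(d.+1,d);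
   a functional V -> k is a row matrix f : 'M_(1, d.+1); a map k -> V is a
   column g : 'M_(d.+1, 1). *)
From HB Require Import structures.
From mathcomp Require Import all_boot all_order all_algebra.
Set Implicit Arguments. Unset Strict Implicit. Unset Printing Implicit Defensive.
Import GRing.Theory.
Local Open Scope ring_scope.

Definition sc (k : fieldType) (a : 'M[k]_1) : k := a 0 0.

(* epsilon_(F,f)(lambda_s) = f_s A_{ell_s} f_s^{-1},  with A_{ell_s} = rho(ell_s) = Lam *)
Definition eps_lambda (k : fieldType) (n : nat)
  (f : 'M[k]_(1, n)) (g : 'M[k]_(n, 1)) (Lam : 'M[k]_n) : k :=
  sc (f *m Lam *m g).

Definition eps_mu (k : fieldType) (n : nat)
  (f : 'M[k]_(1, n)) (g : 'M[k]_(n, 1)) (M : 'M[k]_n) : k :=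
  1 - sc (f *m (1%:M - M) *m g).

(* epsilon_(F,f)(c_ss) = f_s A_c (id_V - M_s) f_s^{-1} for a pure cord c on K_s,
   whose trivialized parallel transport (as a loop) is A_c = rho(c) = C *)
Definition eps_cord (k : fieldType) (n : nat)
  (f : 'M[k]_(1, n)) (g : 'M[k]_(n, 1)) (C M : 'M[k]_n) : k :=
  sc (f *m C *m (1%:M - M) *m g).

(* In a basis of V made of a right inverse g of f followed by a basis of
   W = im T, a map A preserving W (A T = T R) has diagonal blocks f A g, its
   action on V/W, and R, its action on W; hence tr A = f A g + tr R.  The three
   formulas are this identity for rho(l_s), for id - rho(m_s), and for
   rho(c_s) (id - rho(m_s)), the last two vanishing on W. *)
From HB Require Import structures.
From mathcomp Require Import all_boot all_order all_algebra.
Import GRing.Theory.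
Local Open Scope ring_scope.

Section TraceOnInvariantSubspace.

Context {k : fieldType} {m d : nat}.
Context {T : 'M[k]_(m + d, d)} {f : 'M[k]_(m, m + d)} {g : 'M[k]_(m + d, m)}.
Hypotheses (T_full : row_full T) (fT0 : f *m T = 0) (fg1 : f *m g = 1%:M).

Lemma left_inverse_killing_section :
  exists2 Q : 'M[k]_(d, m + d), Q *m T = 1%:M & Q *m g = 0.
Proof.
have [Q0 Q0T1] := row_fullP T_full.
exists (Q0 - Q0 *m g *m f).
  by rewrite mulmxBl -!mulmxA fT0 !mulmx0 subr0.
by rewrite mulmxBl -!mulmxA fg1 mulmx1 subrr.
Qed.

Lemma mxtrace_invariant (A : 'M[k]_(m + d)) (R : 'M[k]_d) :
  A *m T = T *m R -> \tr A = \tr (f *m A *m g) + \tr R.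
Proof.
move=> AT_TR; have [Q QT1 Qg0] := left_inverse_killing_section.
pose P := row_mx g T; pose P' := col_mx f Q.
have P'P1 : P' *m P = 1%:M.
  by rewrite mul_col_row fg1 fT0 Qg0 QT1 -scalar_mx_block.
have PP'1 : P *m P' = 1%:M := mulmx1C P'P1.
have -> : \tr A = \tr (P' *m A *m P).
  by rewrite -mxtrace_mulC mulmxA PP'1 mul1mx.
by rewrite mul_col_mx mul_col_row mxtrace_block -(mulmxA Q) AT_TR mulmxA QT1 mul1mx.
Qed.

Lemma mxtrace_vanishing (A : 'M[k]_(m + d)) :
  A *m T = 0 -> \tr A = \tr (f *m A *m g).
Proof.
move=> AT0; rewrite (@mxtrace_invariant A 0) ?mulmx0 //.
by rewrite linear0 addr0.
Qed.

End TraceOnInvariantSubspace.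

Lemma sc_mxtrace (k : fieldType) (a : 'M[k]_1) : sc a = \tr a.
Proof. by rewrite trace_mx11. Qed.

Theorem proposition4p8 (k : fieldType) (d : nat)
  (M Lam C : 'M[k]_d.+1)        (* rho(m_s), rho(ell_s), rho(c_s) in GL(V) *)
  (R : 'M[k]_d)                  (* rho_s(K_s) in GL(W_s) *)
  (T : 'M[k]_(d.+1, d))          (* T_s : W_s -> V *)
  (f : 'M[k]_(1, d.+1))          (* local trivialization f_s : V -> k *)
  (g : 'M[k]_(d.+1, 1))          (* a right inverse f_s^{-1} of f_s *)
  (hM : M \in unitmx) (hLam : Lam \in unitmx) (hC : C \in unitmx)
  (hR : R \in unitmx)
  (hT : \rank T = d)             (* T_s injective, cokernel of dim 1 *)
  (hmer : M *m T = T)            (* meridian acts trivially on W_s *)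
  (hlong : Lam *m T = T *m R)    (* rho(ell_s) T_s = T_s rho_s(K_s) *)
  (hf : row_free f)              (* f_s surjective *)
  (hfW : f *m T = 0)             (* f_s vanishes on W_s *)
  (hg : f *m g = 1%:M) :         (* g is a right inverse of f_s *)
  [/\ eps_lambda f g Lam = \tr Lam - \tr R,
      eps_mu f g M = 1 - \tr (1%:M - M)
    & eps_cord f g C M = \tr (C - M *m C)].
Proof.
have T_full : row_full T by rewrite /row_full hT.
have trace_split := mxtrace_invariant (m := 1) T_full hfW hg.
have trace_vanishing := mxtrace_vanishing (m := 1) T_full hfW hg.
have meridian_T0 : (1%:M - M) *m T = 0 by rewrite mulmxBl mul1mx hmer subrr.
have cord_T0 : C *m (1%:M - M) *m T = 0 by rewrite -mulmxA meridian_T0 mulmx0.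
split.
- by rewrite /eps_lambda sc_mxtrace (trace_split _ _ hlong) addrK.
- by rewrite /eps_mu sc_mxtrace -(trace_vanishing _ meridian_T0).
- rewrite /eps_cord sc_mxtrace -(mulmxA f C) -(trace_vanishing _ cord_T0).
  by rewrite mulmxBr mulmx1 !linearB /= mxtrace_mulC.
Qed.
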